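(* Let $(X,\mathcal{O}(X))$ be a measurable space, $\mathcal{A}$ a unital $C^*$-algebra and $\mathcal{H}$ a Hilbert space. If $\mathcal{I}:\mathcal{O}(X)\to CP(\mathcal{A},\mathcal{B}(\mathcal{H}))$ is a pure CP instrument, then its POVM marginal $\mu_\mathcal{I}$ is trivial, i.e. for every $A\in\mathcal{O}(X)$ either $\mu_\mathcal{I}(A)=0$ or $\mu_\mathcal{I}(A)=\mu_\mathcal{I}(X)$.
   Context: A CP instrument is a map $\mathcal{I}$ from $\mathcal{O}(X)$ to the completely positive maps $\mathcal{A}\to\mathcal{B}(\mathcal{H})$ such that for all $a\in\mathcal{A}$, $h,k\in\mathcal{H}$, $A\mapsto\langle h,\mathcal{I}(A)(a)k\rangle$ is a countably additive complex measure. Its POVM marginal is $\mu_\mathcal{I}(A)=\mathcal{I}(A)(1_\mathcal{A})$. A CP instrument $\mathcal{J}$ is dominated by $\mathcal{I}$ if $\mathcal{I}-\mathcal{J}$ is a CP instrument; $\mathcal{I}$ is pure if every CP instrument dominated by $\mathcal{I}$ equals $t\mathcal{I}$ for some $t\in[0,1]$. *)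

From mathcomp Require Import all_boot all_algebra complex.
From mathcomp Require Import all_classical all_reals.
From mathcomp Require Import measure_theory.measurable_structure.
Set Implicit Arguments. Unset Strict Implicit. Unset Printing Implicit Defensive.
Import GRing.Theory Num.Theory.
Local Open Scope ring_scope.
Local Open Scope classical_set_scope.

Section Defs.
Variable R : realType.
Local Notation C := R[i].

Definition is_unital_Cstar_algebra (A : algType C) (star : A -> A) (nA : A -> R) :=
  (
      (forall a, star (star a) = a) /\
      (forall a b, star (a + b) = star a + star b) /\
      (forall (c : C) a, star (c *: a) = c^* *: star a) /\
      (forall a b, star (a * b) = star b * star a)) /\
  (
      (forall a, nA a = 0 <-> a = 0) /\
      (forall a b, nA (a + b) <= nA a + nA b) /\
      (forall (c : C) a, real_complex R (nA (c *: a)) = `|c| * real_complex R (nA a))) /\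
  (
      (forall a b, nA (a * b) <= nA a * nA b) /\
      (forall a, nA (star a * a) = nA a ^+ 2)) /\
      (forall u : nat -> A,
          (forall e : R, 0 < e -> exists N, forall m n, (N <= m)%N -> (N <= n)%N ->
               nA (u m - u n) < e) ->
          exists l, forall e : R, 0 < e -> exists N, forall n, (N <= n)%N ->
               nA (u n - l) < e).

Definition ipnorm (H : lmodType C) (ip : H -> H -> C) (h : H) : R :=
  Num.sqrt (complex.Re (ip h h)).

Definition is_Hilbert_space (H : lmodType C) (ip : H -> H -> C) :=
  [/\ (forall h (c : C) k k', ip h (c *: k + k') = c * ip h k + ip h k'),
      (forall h k, ip k h = (ip h k)^*),
      (forall h, 0 <= ip h h),
      (forall h, ip h h = 0 -> h = 0) &
      (forall u : nat -> H,
          (forall e : R, 0 < e -> exists N, forall m n, (N <= m)%N -> (N <= n)%N ->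
               ipnorm ip (u m - u n) < e) ->
          exists l, forall e : R, 0 < e -> exists N, forall n, (N <= n)%N ->
               ipnorm ip (u n - l) < e)].

Definition is_bounded_operator (H : lmodType C) (ip : H -> H -> C) (T : H -> H) :=
  (forall (c : C) h k, T (c *: h + k) = c *: T h + T k) /\
  exists M : R, forall h, ipnorm ip (T h) <= M * ipnorm ip h.

(** ** Completely positive maps A -> B(H).
    [Phi] is linear, takes values in B(H), and for every n the amplification
    Phi_n : M_n(A) -> M_n(B(H)) = B(H^n) maps positive elements x^* x of
    M_n(A) to positive operators on H^n, i.e. for all xi in H^n,
    < xi, Phi_n(x^* x) xi > >= 0, where (x^* x)_{ij} = sum_k (x_{ki})^* x_{kj}. *)
Definition is_CP (A : algType C) (star : A -> A) (H : lmodType C)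
    (ip : H -> H -> C) (Phi : A -> H -> H) :=
  [/\ (forall (c : C) a b, Phi (c *: a + b) = (fun h => c *: Phi a h + Phi b h)),
      (forall a, is_bounded_operator ip (Phi a)) &
      (forall (n : nat) (x : 'I_n -> 'I_n -> A) (xi : 'I_n -> H),
          0 <= \sum_(i < n) \sum_(j < n)
                 ip (xi i) (Phi (\sum_(k < n) star (x k i) * x k j) (xi j)))].

(** ** CP instruments on a measurable space X (values on non-measurable sets
    are irrelevant). *)
Definition is_CP_instrument (d : measure_display) (X : measurableType d)
    (A : algType C) (star : A -> A) (H : lmodType C) (ip : H -> H -> C)
    (I : set X -> A -> H -> H) :=
  (forall B, measurable B -> is_CP star ip (I B)) /\
  (* countable additivity of B |-> < h, I(B)(a) k > *)
  (forall (a : A) (h k : H) (F : nat -> set X),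
      (forall n, measurable (F n)) -> trivIset setT F ->
      forall e : C, 0 < e -> exists N, forall n, (N <= n)%N ->
        `| \sum_(i < n) ip h (I (F i) a k) - ip h (I (\bigcup_i F i) a k) | < e).

Definition instr_sub (X : Type) (A : Type) (H : zmodType)
    (I J : set X -> A -> H -> H) : set X -> A -> H -> H :=
  fun B a h => I B a h - J B a h.

Definition dominated (d : measure_display) (X : measurableType d)
    (A : algType C) (star : A -> A) (H : lmodType C) (ip : H -> H -> C)
    (J I : set X -> A -> H -> H) :=
  is_CP_instrument star ip J /\ is_CP_instrument star ip (instr_sub I J).

Definition pure_instrument (d : measure_display) (X : measurableType d)
    (A : algType C) (star : A -> A) (H : lmodType C) (ip : H -> H -> C)
    (I : set X -> A -> H -> H) :=
  is_CP_instrument star ip I /\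
  forall J : set X -> A -> H -> H, dominated star ip J I ->
    exists t : R, 0 <= t <= 1 /\
      forall B, measurable B -> forall a h, J B a h = real_complex R t *: I B a h.

Definition povm_marginal (X : Type) (A : algType C) (H : lmodType C)
    (I : set X -> A -> H -> H) (B : set X) : H -> H := I B 1.

End Defs.

From mathcomp Require Import all_boot all_algebra complex.
From mathcomp Require Import all_classical all_reals.
From mathcomp Require Import measure_theory.measurable_structure.
From mathcomp Require Import order.
Set Implicit Arguments. Unset Strict Implicit. Unset Printing Implicit Defensive.
Import Order.TTheory GRing.Theory Num.Theory.
Local Open Scope ring_scope.
Local Open Scope classical_set_scope.

Section SequenceLimits.
Variable K : numDomainType.

Definition seq_cvg_to (u : nat -> K) (l : K) :=
  forall e : K, 0 < e -> exists N, forall n, (N <= n)%N -> `|u n - l| < e.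

Lemma seq_cvg_to_eventually_const (u : nat -> K) (c l : K) (N0 : nat) :
  (forall n, (N0 <= n)%N -> u n = c) -> seq_cvg_to u l -> c = l.
Proof.
move=> uc ul; apply/eqP; rewrite -subr_eq0; apply: contraT => cl.
have [N uNl] := ul `|c - l| ltac:(by rewrite normr_gt0).
by have := uNl _ (leq_maxr N0 N); rewrite uc ?leq_maxl // ltxx.
Qed.

Lemma seq_cvg_to_mulrn (z : K) : seq_cvg_to (fun n => z *+ n) z -> z = 0.
Proof.
move=> zl; apply/eqP; apply: contraT => z0.
have [N zNl] := zl `|z| ltac:(by rewrite normr_gt0).
have := zNl N.+2 (leqW (leqnSn N)).
by rewrite mulrS addrAC subrr add0r normrMn mulrS gtrDl le_gtF // mulrn_wge0.
Qed.

End SequenceLimits.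

Lemma scaler_fixed_eq0 (K : fieldType) (V : lmodType K) (c : K) (v : V) :
  c != 1 -> v = c *: v -> v = 0.
Proof.
move=> c1 /eqP; rewrite -subr_eq0 -{1}(scale1r v) -scalerBl scaler_eq0.
by rewrite subr_eq0 eq_sym (negPf c1) => /eqP.
Qed.

Section Instruments.
Variables (R : realType) (d : measure_display) (X : measurableType d).
Variables (A : algType R[i]) (star : A -> A).
Variables (H : lmodType R[i]) (ip : H -> H -> R[i]).
Hypothesis ip_Hilbert : is_Hilbert_space ip.

Lemma ipD h x y : ip h (x + y) = ip h x + ip h y.
Proof.
case: ip_Hilbert => ip_lin _ _ _ _.
by have := ip_lin h 1 x y; rewrite scale1r mul1r.
Qed.

Lemma ipB h x y : ip h (x - y) = ip h x - ip h y.
Proof.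
case: ip_Hilbert => ip_lin _ _ _ _.
by have := ip_lin h (-1) y x; rewrite scaleN1r mulN1r addrC [ip h x - _]addrC.
Qed.

Lemma ipr0 h : ip h 0 = 0.
Proof. by rewrite -(subrr 0) ipB subrr. Qed.

Lemma ipr_inj x y : (forall h, ip h x = ip h y) -> x = y.
Proof.
case: ip_Hilbert => _ _ _ ip_def _ ipxy.
by apply/eqP; rewrite -subr_eq0; apply/eqP/ip_def; rewrite ipB ipxy subrr.
Qed.

Lemma CP_instrument_cvg (I : set X -> A -> H -> H) a h k (F : nat -> set X) :
  is_CP_instrument star ip I ->
  (forall n, measurable (F n)) -> trivIset setT F ->
  seq_cvg_to (fun n => \sum_(i < n) ip h (I (F i) a k))
             (ip h (I (\bigcup_i F i) a k)).
Proof. by move=> [_ I_add] mF tF; exact: I_add. Qed.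

Lemma CP_instrument_set0 (I : set X -> A -> H -> H) a k :
  is_CP_instrument star ip I -> I set0 a k = 0.
Proof.
move=> I_instr; apply: ipr_inj => h; rewrite ipr0.
apply: seq_cvg_to_mulrn.
have := CP_instrument_cvg a h k I_instr (fun _ => measurable0) (@trivIset_set0 nat X setT).
rewrite bigcup0 //.
by under [fun n => _]funext => n do rewrite sumr_const card_ord.
Qed.

Lemma CP_instrument_splitI (I : set X -> A -> H -> H) (C B : set X) a k :
  is_CP_instrument star ip I -> measurable C -> measurable B ->
  I C a k = I (C `&` B) a k + I (C `&` ~` B) a k.
Proof.
move=> I_instr mC mB; apply: ipr_inj => h; rewrite ipD.
have mF : forall n, measurable (bigcup2 (C `&` B) (C `&` ~` B) n).
  move=> [|[|n]] /=; [exact: measurableI| |exact: measurable0].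
  by apply: measurableI => //; exact: measurableC.
have tF : trivIset setT (bigcup2 (C `&` B) (C `&` ~` B)).
  by rewrite -trivIset_bigcup2 setIACA setICr !setI0.
have := CP_instrument_cvg a h k I_instr mF tF.
rewrite bigcup2E -setIUr setUCr setIT => cvg_sum.
apply/esym/(seq_cvg_to_eventually_const (N0 := 2%N) _ cvg_sum) => n n2.
rewrite -(subnKC n2) !big_ord_recl big1 ?addr0 // => i _.
by rewrite /= CP_instrument_set0 ?ipr0.
Qed.

Lemma eq_CP_instrument (I J : set X -> A -> H -> H) :
  (forall C, measurable C -> I C = J C) ->
  is_CP_instrument star ip I -> is_CP_instrument star ip J.
Proof.
move=> IJ [I_CP I_add]; split=> [C mC|a h k F mF tF].
  by rewrite -IJ //; exact: I_CP.
move=> e e0; have [N sum_close] := I_add a h k F mF tF e e0.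
exists N => n Nn; rewrite -IJ; last exact: bigcup_measurable.
by under eq_bigr => i _ do rewrite -IJ //; exact: sum_close.
Qed.

Lemma CP_instrument_setIr (I : set X -> A -> H -> H) (D : set X) :
  measurable D -> is_CP_instrument star ip I ->
  is_CP_instrument star ip (fun C => I (C `&` D)).
Proof.
move=> mD [I_CP I_add]; split=> [C mC|a h k F mF tF].
  by apply: I_CP; exact: measurableI.
rewrite setI_bigcupl; apply: I_add; last exact: trivIset_setIr.
by move=> n; exact: measurableI.
Qed.

Lemma dominated_setIr (I : set X -> A -> H -> H) (B : set X) :
  measurable B -> is_CP_instrument star ip I ->
  dominated star ip (fun C => I (C `&` B)) I.
Proof.
move=> mB I_instr; split; first exact: CP_instrument_setIr.
apply: (eq_CP_instrument _ (CP_instrument_setIr (measurableC mB) I_instr)).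
move=> C mC; apply: funext => a; apply: funext => k.
by rewrite /instr_sub (CP_instrument_splitI a k I_instr mC mB) addrAC subrr add0r.
Qed.

End Instruments.

Theorem corollary2p20 (R : realType) (d : measure_display) (X : measurableType d)
    (A : algType R[i]) (star : A -> A) (nA : A -> R)
    (H : lmodType R[i]) (ip : H -> H -> R[i])
    (I : set X -> A -> H -> H) :
  is_unital_Cstar_algebra star nA ->
  is_Hilbert_space ip ->
  pure_instrument star ip I ->
  forall B : set X, measurable B ->
    povm_marginal I B = (fun _ => 0) \/ povm_marginal I B = povm_marginal I setT.
Proof.
move=> _ ip_Hilbert [I_instr I_pure] B mB.
have [t [_ Jt]] := I_pure _ (dominated_setIr ip_Hilbert mB I_instr).
have muBT h : I B 1 h = real_complex R t *: I setT 1 h.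
  by rewrite -Jt // setTI.
have muBB h : I B 1 h = real_complex R t *: I B 1 h.
  by rewrite -Jt // setIid.
rewrite /povm_marginal.
have [t1|t1] := eqVneq (real_complex R t) 1.
  by right; apply: funext => h; rewrite muBT t1 scale1r.
by left; apply: funext => h; apply: (scaler_fixed_eq0 t1); exact: muBB.
Qed.
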